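(* For all $p, q, n \in \mathbb{N}$ with $p \le q$, $$u((p,q),n) \;=\; \sum_{i=0}^{n} \binom{p}{i}\binom{p+n-i}{p}\binom{q}{n-i}.$$
   Context: Let $\mathbb{N} = \{0,1,2,\dots\}$. For $(p,q) \in \mathbb{N}^2$ and $n \in \mathbb{N}$, an unrestricted generalized jump path of length $n$ starting at $(p,q)$ is a sequence $(x_0, \dots, x_n)$ of points of $\mathbb{N}^2$ satisfying three conditions: - $x_0 = (p,q)$; - for every $i$, each coordinate of $x_{i+1}$ is at most the corresponding coordinate of $x_i$; - $x_{i+1} \ne x_i$ for every $i$. Let $u((p,q),n)$ denote the number of such paths. Binomial coefficients satisfy $\binom{a}{b}=0$ if $b<0$ or $b>a$. *)

From mathcomp Require Import all_boot.
Set Implicit Arguments. Unset Strict Implicit. Unset Printing Implicit Defensive.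

(* A path (x_0,...,x_n) of points of N^2 is encoded as a finite function
   'I_n.+1 -> 'I_p.+1 * 'I_q.+1.  Bounding the coordinates by p and q loses
   nothing: since coordinates are nonincreasing and x_0 = (p,q), every point
   of an unrestricted generalized jump path lies in [0,p] x [0,q]. *)
Definition pt (p q : nat) := ('I_p.+1 * 'I_q.+1)%type.

Definition is_jump_path (p q n : nat) (x : {ffun 'I_n.+1 -> pt p q}) : bool :=
  [&& nat_of_ord (x ord0).1 == p,
      nat_of_ord (x ord0).2 == q &
      [forall i : 'I_n,
         [&& nat_of_ord (x (inord i.+1)).1 <= nat_of_ord (x (inord i)).1,
             nat_of_ord (x (inord i.+1)).2 <= nat_of_ord (x (inord i)).2 &
             x (inord i.+1) != x (inord i)]]].

Definition u (p q n : nat) : nat := #|[set x : {ffun 'I_n.+1 -> pt p q} | @is_jump_path p q n x]|.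

From mathcomp Require Import all_boot zify.
Set Implicit Arguments. Unset Strict Implicit. Unset Printing Implicit Defensive.

(* Let P(n, s) be the set of jump paths of length n starting at the point s.
   Removing the first point of a path of length n + 1 from s leaves a path of
   length n from some t strictly below s, so
       |P(n+1, s)| + |P(n, s)| = sum over all t weakly below s of |P(n, t)|.
   The closed form  jump_count n a b = sum_j C(n,j) C(b,j) C(a+j,n)  satisfies
   the same recurrence: its rectangle sums factor into two hockey-stick sums,
   and Pascal's rule splits jump_count (n+1) accordingly.  Since both equal 1
   for n = 0, induction gives |P(n, s)| = jump_count n s.1 s.2.  Finally the
   paper's sum is jump_count n p q after the substitution i = n - j and the
   trinomial revision C(p+j,n) C(n,j) = C(p+j,p) C(p,n-j). *)

(* Trinomial revision: choosing b elements out of a and then c out of those b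
   is the same as choosing the c elements first and then the remaining b - c
   among the other a - c. *)
Lemma bin_subset a b c :
  c <= b -> 'C(a, b) * 'C(b, c) = 'C(a, c) * 'C(a - c, b - c).
Proof.
move=> le_cb; have [le_ba | lt_ab] := leqP b a; last first.
  rewrite (bin_small lt_ab) mul0n; have [le_ca | lt_ac] := leqP c a.
    by rewrite (@bin_small (a - c)) ?muln0 //; lia.
  by rewrite (bin_small lt_ac).
have pos : 0 < c`! * (b - c)`! * (a - b)`! by rewrite !muln_gt0 !fact_gt0.
apply/eqP; rewrite -(eqn_pmul2r pos); apply/eqP.
have le_ca : c <= a by apply: leq_trans le_ba.
have le_bc_ac : b - c <= a - c by apply: leq_sub2r.
have sub_sub : a - c - (b - c) = a - b by lia.
transitivity ('C(a, b) * ('C(b, c) * (c`! * (b - c)`!)) * (a - b)`!); first lia.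
rewrite bin_fact // -mulnA bin_fact //.
transitivity
  ('C(a, c) * (c`! * ('C(a - c, b - c) * ((b - c)`! * (a - c - (b - c))`!))));
  last by rewrite sub_sub; lia.
by rewrite bin_fact // bin_fact.
Qed.

(* Hockey-stick identity, shifted by j: the binomials 'C(j, n), ..., 'C(j + a - 1, n)
   add up to 'C(j + a, n.+1); the term 'C(j, n.+1) vanishes because j <= n. *)
Lemma hockey_stick j n a : j <= n -> \sum_(i < a) 'C(i + j, n) = 'C(a + j, n.+1).
Proof.
move=> le_jn; elim: a => [|a IH]; first by rewrite big_ord0 bin_small.
by rewrite big_ord_recr /= IH addSn binS addnC.
Qed.

Lemma sum_pascal n (f : nat -> nat) :
  \sum_(j < n.+2) 'C(n.+1, j) * f j =
  \sum_(j < n.+1) 'C(n, j) * f j + \sum_(j < n.+1) 'C(n, j) * f j.+1.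
Proof.
rewrite big_ord_recl [in RHS]big_ord_recl !bin0.
under eq_bigr do rewrite lift0 binS mulnDl.
rewrite big_split /= addnA; congr (_ + _).
by rewrite big_ord_recr /= bin_small // mul0n addn0.
Qed.

(* The closed form, in the variable j = n - i of the paper's sum. *)
Definition jump_count (n a b : nat) : nat :=
  \sum_(j < n.+1) 'C(n, j) * ('C(b, j) * 'C(a + j, n)).

Lemma jump_count_rectangle n a b :
  \sum_(a' < a.+1) \sum_(b' < b.+1) jump_count n a' b' =
  \sum_(j < n.+1) 'C(n, j) * ('C(b.+1, j.+1) * 'C(a.+1 + j, n.+1)).
Proof.
rewrite /jump_count; under eq_bigr do rewrite exchange_big /=.
rewrite exchange_big /=; apply: eq_bigr => j _.
have le_jn : j <= n by rewrite -ltnS.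
have col_sum : \sum_(b' < b.+1) 'C(b', j) = 'C(b.+1, j.+1).
  rewrite -[in RHS](addn0 b.+1) -hockey_stick //.
  by apply: eq_bigr => i _; rewrite addn0.
rewrite [_ * 'C(a.+1 + j, _)]mulnC -col_sum -hockey_stick //.
rewrite big_distrl big_distrr /=; apply: eq_bigr => a' _.
rewrite big_distrr big_distrr /=; apply: eq_bigr => b' _; lia.
Qed.

Lemma jump_count_rec n a b :
  jump_count n.+1 a b + jump_count n a b =
  \sum_(a' < a.+1) \sum_(b' < b.+1) jump_count n a' b'.
Proof.
rewrite jump_count_rectangle /jump_count.
rewrite (sum_pascal n (fun j => 'C(b, j) * 'C(a + j, n.+1))) -!big_split /=.
apply: eq_bigr => j _.
rewrite [a + j.+1]addnS [a.+1 + j]addSn !binS; lia.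
Qed.

Lemma paper_sum_jump_count p q n :
  \sum_(0 <= i < n.+1) 'C(p, i) * 'C(p + n - i, p) * 'C(q, n - i) =
  jump_count n p q.
Proof.
rewrite big_rev_mkord subn0 /jump_count; apply: eq_bigr => j _.
have le_jn : j <= n by rewrite -ltnS.
have -> : p + n - (n - j) = p + j by lia.
rewrite subSS (subKn le_jn).
have sym : 'C(p + j, j) = 'C(p + j, p).
  by rewrite -[in LHS]bin_sub ?leq_addl // addnK.
have trinomial : 'C(p + j, n) * 'C(n, j) = 'C(p + j, p) * 'C(p, n - j).
  by rewrite bin_subset // addnK sym.
by rewrite [_ * 'C(p + j, p)]mulnC -trinomial; lia.
Qed.

Lemma inord0 m : inord 0 = ord0 :> 'I_m.+1.
Proof. by apply: val_inj; rewrite /= inordK. Qed.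

Section JumpPaths.

Variables p q : nat.

Local Notation point := (pt p q).
Local Notation path n := {ffun 'I_n.+1 -> point}.

Definition below (t s : point) : bool :=
  (nat_of_ord t.1 <= s.1) && (nat_of_ord t.2 <= s.2).

Definition step (s t : point) : bool := below t s && (t != s).

Definition chain n (x : path n) : bool :=
  [forall i : 'I_n, step (x (inord i)) (x (inord i.+1))].

Definition paths_from n (s : point) : {set path n} :=
  [set x : path n | (x ord0 == s) && chain x].

Lemma u_paths_from n : u p q n = #|paths_from n (ord_max, ord_max)|.
Proof.
apply: eq_card => x; rewrite !inE /is_jump_path andbA; congr (_ && _).
by apply: eq_forallb => i; rewrite andbA.
Qed.

Lemma chainP n (x : path n) :
  reflect (forall k, k < n -> step (x (inord k)) (x (inord k.+1))) (chain x).
Proof.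
apply: (iffP forallP) => [chain_x k lt_kn | chain_x k]; last exact: chain_x.
exact: (chain_x (Ordinal lt_kn)).
Qed.

Definition path_cons n (s : point) (y : path n) : path n.+1 :=
  [ffun i : 'I_n.+2 => if nat_of_ord i is k.+1 then y (inord k) else s].

Definition path_tail n (x : path n.+1) : path n :=
  [ffun j : 'I_n.+1 => x (inord j.+1)].

Lemma path_cons0 n s (y : path n) : path_cons s y ord0 = s.
Proof. by rewrite ffunE. Qed.

Lemma path_consS n s (y : path n) k :
  k <= n -> path_cons s y (inord k.+1) = y (inord k).
Proof. by move=> le_kn; rewrite ffunE inordK. Qed.

Lemma path_cons_inj n s : injective (@path_cons n s).
Proof.
move=> y1 y2 eq_y; apply/ffunP => j; rewrite -(inord_val j).
have le_jn : (j : nat) <= n by rewrite -ltnS.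
have := congr1 (fun x : path n.+1 => x (inord j.+1)) eq_y.
by rewrite /= !path_consS.
Qed.

Lemma path_consK n (x : path n.+1) : path_cons (x ord0) (path_tail x) = x.
Proof.
apply/ffunP => -[[|k] lt_k]; rewrite ffunE /=; first by congr (x _); apply: val_inj.
by rewrite ffunE inordK //; congr (x _); apply: val_inj; rewrite /= inordK.
Qed.

Lemma chain_cons n s (y : path n) :
  chain (path_cons s y) = step s (y ord0) && chain y.
Proof.
apply/chainP/andP => [chain_sy | [step_s /chainP chain_y] [|k] lt_k].
- split.
    by have := chain_sy 0 (ltn0Sn n); rewrite inord0 path_cons0 path_consS // inord0.
  apply/chainP => k lt_kn.
  by have := chain_sy k.+1 lt_kn; rewrite !path_consS // ltnW.
- by rewrite inord0 path_cons0 path_consS // inord0.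
- by rewrite !path_consS // ?chain_y // ltnW.
Qed.

Lemma paths_from_S n (s : point) :
  paths_from n.+1 s = path_cons s @: [set y : path n | step s (y ord0) && chain y].
Proof.
apply/setP => x; rewrite !inE; apply/andP/imsetP => [[/eqP x0 chain_x] | [y]].
  exists (path_tail x); last by rewrite -x0 path_consK.
  by rewrite inE -chain_cons -x0 path_consK.
by rewrite inE => /andP [step_s chain_y] ->; rewrite path_cons0 eqxx chain_cons step_s.
Qed.

Lemma card_paths_from_S n (s : point) :
  #|paths_from n.+1 s| = \sum_(t | step s t) #|paths_from n t|.
Proof.
rewrite paths_from_S card_imset; last exact: path_cons_inj.
rewrite -sum1_card (partition_big (fun y : path n => y ord0) (step s));
  last by move=> y; rewrite inE => /andP [].
apply: eq_bigr => t step_t; rewrite -sum1_card; apply: eq_bigl => y.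
rewrite !inE; case: eqP => [-> | _]; last by rewrite andbF.
by rewrite step_t andbT.
Qed.

(* Counting the stationary continuation as well turns the recurrence into a
   sum over the full rectangle below s. *)
Lemma card_paths_from_rec n (s : point) :
  #|paths_from n.+1 s| + #|paths_from n s| =
  \sum_(t : point | below t s) #|paths_from n t|.
Proof.
rewrite [RHS](bigD1 s); last by rewrite /below !leqnn.
by rewrite addnC card_paths_from_S.
Qed.

Lemma sum_below (g : nat -> nat -> nat) (s : point) :
  \sum_(t | below t s) g t.1 t.2 = \sum_(a < s.1.+1) \sum_(b < s.2.+1) g a b.
Proof.
rewrite (big_ord_widen _ (fun a => \sum_(b < s.2.+1) g a b) (ltn_ord s.1)).
under [RHS]eq_bigr do rewrite (big_ord_widen _ _ (ltn_ord s.2)).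
by rewrite pair_big; apply: eq_bigl => t; rewrite !ltnS.
Qed.

Lemma paths_from0 (s : point) : paths_from 0 s = [set [ffun=> s]].
Proof.
apply/setP => x; rewrite !inE; apply/andP/eqP => [[/eqP x0 _] | ->].
  by apply/ffunP => i; rewrite ffunE (ord1 i).
by rewrite ffunE; split=> //; apply/forallP => -[].
Qed.

Lemma card_paths_from n (s : point) : #|paths_from n s| = jump_count n s.1 s.2.
Proof.
elim: n s => [|n IH] s.
  by rewrite paths_from0 cards1 /jump_count big_ord1 !bin0.
apply: (@addIn (jump_count n s.1 s.2)).
rewrite jump_count_rec -sum_below -IH card_paths_from_rec.
by apply: eq_bigr => t _; rewrite IH.
Qed.

End JumpPaths.

Theorem mainTheorem10 (p q n : nat) :
  p <= q ->
  u p q n = \sum_(0 <= i < n.+1) 'C(p, i) * 'C(p + n - i, p) * 'C(q, n - i).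
Proof.
by move=> _; rewrite paper_sum_jump_count u_paths_from card_paths_from.
Qed.
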